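(* Let $l$ and $m$ be integers with $l \geqslant 2$ and $0 \leqslant m \leqslant 4l$. Then \[ f(l,m) := \sum_{j=0}^{\min\{l, \lfloor m/2\rfloor\}} \binom{l}{j}\binom{4l}{2m-4j} \geqslant \binom{4l}{m}. \]
   Context: Convention: $\binom{a}{b} = 0$ if $b > a$. *)

From mathcomp Require Import all_boot.
Set Implicit Arguments. Unset Strict Implicit. Unset Printing Implicit Defensive.

(* Note: for j <= floor(m/2), 2m - 4j >= 0, so truncated nat subtraction is exact.
   mathcomp's 'C(a,b) = 0 when b > a, matching the paper's convention. *)
Definition f (l m : nat) : nat :=
  \sum_(0 <= j < (minn l m./2).+1) 'C(l, j) * 'C(4 * l, 2 * m - 4 * j).

From mathcomp Require Import all_boot all_algebra zify.
Import GRing.Theory.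

(* C(4l, m) is the coefficient of x^(2m) in B_l = (1 + x^2)^(4l), and f(l, m)
   the coefficient of x^(2m) in F_l = (1 + x^4)^l (1 + x)^(4l).  Say that B is
   even-dominated by F when the odd coefficients of B vanish and each even one
   is at most the corresponding coefficient of F; for polynomials with
   nonnegative coefficients this relation is preserved by products.  Since
   B_(a+b) = B_a B_b and F_(a+b) = F_a F_b, and every l >= 2 is a sum of 2s and
   3s, it suffices to check the cases l = 2 and l = 3 by computation (the case
   l = 1 fails at m = 2). *)

Lemma coef_1addX_exp n i : (((1 + 'X) ^+ n)`_i)%R = 'C(n, i).
Proof.
rewrite addrC exprD1n coef_sum.
under eq_bigr do rewrite coefMn coefXn -mulrnA natn mulnbl eq_sym.
by rewrite -big_mkcond big_ord1_eq ltnS; case: leqP => // /bin_small.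
Qed.

Lemma coef_1addXn_exp k n i : 0 < k ->
  (((1 + 'X^k) ^+ n)`_i)%R = if k %| i then 'C(n, i %/ k) else 0.
Proof.
move=> k_gt0.
have -> : ((1 + 'X^k) ^+ n = (1 + 'X) ^+ n \Po 'X^k :> {poly nat})%R.
  by rewrite rmorphXn /= comp_polyD comp_polyC comp_polyX.
by rewrite coef_comp_poly_Xn // coef_1addX_exp.
Qed.

Lemma coef_1addXn_expM k n (p : {poly nat}) i :
  (((1 + 'X^k) ^+ n * p)`_i)%R =
  \sum_(j < n.+1) 'C(n, j) * (if i < k * j then 0 else (p`_(i - k * j))%R).
Proof.
rewrite addrC exprD1n mulr_suml coef_sum; apply: eq_bigr => j _.
by rewrite mulrnAl coefMn -exprM coefXnM -mulr_natl natn.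
Qed.

Definition even_dominated (p q : {poly nat}) : Prop :=
  forall i, (p`_i)%R <= (if odd i then 0 else (q`_i)%R).

Lemma even_dominatedM p1 p2 q1 q2 :
  even_dominated p1 q1 -> even_dominated p2 q2 ->
  even_dominated (p1 * p2)%R (q1 * q2)%R.
Proof.
move=> dom1 dom2 i; rewrite !coefM.
have dom_term (j : 'I_i.+1) : (p1`_j * p2`_(i - j))%R <=
    (if odd i then 0 else q1`_j * q2`_(i - j))%R.
  have j_le_i : j <= i by rewrite -ltnS.
  have := dom1 j; have := dom2 (i - j); rewrite (oddB j_le_i).
  case: (odd j) => [_|]; first by rewrite leqn0 => /eqP->.
  rewrite addbF; case: (odd i); first by rewrite leqn0 => /eqP-> _; rewrite mulr0.
  by move=> le2 le1; apply: leq_mul.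
case: (odd i) in dom_term *; last by apply: leq_sum => j _; apply: dom_term.
by rewrite big1 // => j _; apply/eqP; rewrite -leqn0 dom_term.
Qed.

Definition binom_poly (l : nat) : {poly nat} := ((1 + 'X^2) ^+ (4 * l))%R.

Definition f_poly (l : nat) : {poly nat} :=
  ((1 + 'X^4) ^+ l * (1 + 'X) ^+ (4 * l))%R.

Lemma binom_polyD a b : binom_poly (a + b) = (binom_poly a * binom_poly b)%R.
Proof. by rewrite /binom_poly mulnDr exprD. Qed.

Lemma f_polyD a b : f_poly (a + b) = (f_poly a * f_poly b)%R.
Proof. by rewrite /f_poly mulnDr !exprD mulrACA. Qed.

Lemma coef_binom_poly l i :
  ((binom_poly l)`_i)%R = if odd i then 0 else 'C(4 * l, i./2).
Proof. by rewrite coef_1addXn_exp // dvdn2 divn2; case: odd. Qed.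

Lemma coef_f_poly_double l m : ((f_poly l)`_m.*2)%R = f l m.
Proof.
rewrite coef_1addXn_expM /f.
have min_le : (minn l m./2).+1 <= l.+1 by rewrite ltnS geq_minl.
rewrite (big_nat_widen _ _ _ _ _ min_le).
rewrite [RHS]big_mkcond big_mkord; apply: eq_bigr => j _.
have -> : (m.*2 < 4 * j) = (m./2 < j).
  by rewrite ltn_half_double -!mul2n -[4]/(2 * 2) -mulnA ltn_pmul2l.
rewrite coef_1addX_exp ltnS leq_min -[j <= l]ltnS ltn_ord /= mul2n.
by case: (leqP j m./2); rewrite ?muln0.
Qed.

Lemma even_dominated_binom_f_iff l :
  even_dominated (binom_poly l) (f_poly l) <-> forall m, 'C(4 * l, m) <= f l m.
Proof.
split=> [dom m | le_binom_f i].
  by have := dom m.*2; rewrite coef_binom_poly coef_f_poly_double odd_double doubleK.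
rewrite coef_binom_poly; case: ifP => // /negbT i_even.
by rewrite -{2}(even_halfK i_even) coef_f_poly_double.
Qed.

Lemma binom_le_f_of_table l :
  all (fun m => 'C(4 * l, m) <= f l m) (iota 0 (4 * l).+1) ->
  forall m, 'C(4 * l, m) <= f l m.
Proof.
move=> /allP table m; case: (leqP m (4 * l)) => [m_le | /bin_small-> //].
by apply: table; rewrite mem_iota.
Qed.

Lemma even_dominated_binom_f_base l :
  (l == 2) || (l == 3) -> even_dominated (binom_poly l) (f_poly l).
Proof.
by case/orP=> /eqP->; apply/even_dominated_binom_f_iff/binom_le_f_of_table;
  rewrite /f unlock.
Qed.

Lemma even_dominated_binom_f l :
  2 <= l -> even_dominated (binom_poly l) (f_poly l).
Proof.
elim/ltn_ind: l => l IH l_ge2.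
have [l_lt4 | l_ge4] := ltnP l 4.
  by apply: even_dominated_binom_f_base; lia.
rewrite -(subnK l_ge2) binom_polyD f_polyD.
by apply: even_dominatedM; [apply: IH; lia | apply: even_dominated_binom_f_base].
Qed.

Theorem lemma3p16 (l m : nat) (hl : 2 <= l) (hm : m <= 4 * l) :
  'C(4 * l, m) <= f l m.
Proof.
by move/even_dominated_binom_f_iff: (even_dominated_binom_f l hl); apply.
Qed.
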